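(* Let $\lambda\ge 0$ and $\Omega:\mathbb{R}^d\to[0,\infty)$ be fixed, and define for any finite set of samples $S\subset\mathbb{R}^d\times\mathbb{R}$ and $\boldsymbol{\theta}=(\mathbf{w},b)\in\mathbb{R}^{d+1}$ $$\mathrm{MSE}(S,\boldsymbol{\theta})=\frac{1}{|S|}\sum_{(\mathbf{x},y)\in S}(\mathbf{w}^\top\mathbf{x}+b-y)^2,\qquad \mathcal{L}(S,\boldsymbol{\theta})=\mathrm{MSE}(S,\boldsymbol{\theta})+\lambda\,\Omega(\mathbf{w}).$$ Let $\mathcal{D}_{tr}$ be a pristine training set of $n$ samples, let $0\le\alpha<1$ be such that $\alpha n$ is an integer, and let $\mathcal{D}_p$ be an arbitrary set of $\alpha n$ samples (poisoning points), so that $\mathcal{D}=\mathcal{D}_{tr}\cup\mathcal{D}_p$ has $N=(1+\alpha)n$ samples indexed by $\{1,\dots,N\}$. Let $(\hat{\boldsymbol{\theta}},\hat{\mathcal{I}})$ be a global minimizer of $$\min_{\boldsymbol{\theta},\,\mathcal{I}}\ \mathcal{L}(\mathcal{D}^{\mathcal{I}},\boldsymbol{\theta})\quad\text{subject to } \mathcal{I}\subseteq\{1,\dots,N\},\ |\mathcal{I}|=n,$$ where $\mathcal{D}^{\mathcal{I}}$ denotes the samples of $\mathcal{D}$ with indices in $\mathcal{I}$, and let $\boldsymbol{\theta}^*\in\arg\min_{\boldsymbol{\theta}}\mathcal{L}(\mathcal{D}_{tr},\boldsymbol{\theta})$. Then there exists a subset $\mathcal{D}'\subseteq\mathcal{D}_{tr}$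 of $(1-\alpha)n$ pristine samples such that $$\mathrm{MSE}(\mathcal{D}',\hat{\boldsymbol{\theta}})\le\Big(1+\frac{\alpha}{1-\alpha}\Big)\,\mathcal{L}(\mathcal{D}_{tr},\boldsymbol{\theta}^* ).$$ No assumption is made on how $\mathcal{D}_p$ is generated.
   Context: $\mathcal{L}$ is the regularized linear-regression loss with linear predictor $f(\mathbf{x},\boldsymbol{\theta})=\mathbf{w}^\top\mathbf{x}+b$; typical choices of $\Omega$ are $0$ (OLS), $\tfrac12\|\mathbf{w}\|_2^2$ (ridge), $\|\mathbf{w}\|_1$ (LASSO), or an elastic-net combination. *)

(* the statement is purely algebraic/order-theoretic over the reals,
   so it is stated for an arbitrary real field R. *)
From HB Require Import structures.
From mathcomp Require Import all_boot all_order all_algebra.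
Set Implicit Arguments. Unset Strict Implicit. Unset Printing Implicit Defensive.
Import Order.TTheory GRing.Theory Num.Theory.
Local Open Scope ring_scope.

Definition dotv (R : numFieldType) (d : nat) (w x : 'rV[R]_d) : R :=
  \sum_(j < d) w 0 j * x 0 j.

(* MSE(S, (w,b)) for the sub-sample S = {(x i, y i) | i in A} of an indexed data set *)
Definition mse (R : numFieldType) (d : nat) (I : finType) (A : {set I})
    (x : I -> 'rV[R]_d) (y : I -> R) (w : 'rV[R]_d) (b : R) : R :=
  (#|A|%:R)^-1 * \sum_(i in A) (dotv w (x i) + b - y i) ^+ 2.

Definition loss (R : numFieldType) (d : nat) (lam : R) (Omega : 'rV[R]_d -> R)
    (I : finType) (A : {set I}) (x : I -> 'rV[R]_d) (y : I -> R)
    (w : 'rV[R]_d) (b : R) : R :=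
  mse A x y w b + lam * Omega w.

(* concatenation of the pristine set (indices 0..n-1) and the poisoning set
   (indices n..n+m-1) into the full data set D indexed by 'I_(n+m) *)
Definition catd (T : Type) (n m : nat) (ftr : 'I_n -> T) (fp : 'I_m -> T)
    (i : 'I_(n + m)) : T :=
  match split i with inl j => ftr j | inr k => fp k end.

From HB Require Import structures.
From mathcomp Require Import all_boot all_order all_algebra.
From mathcomp Require Import ring.
Import Order.TTheory GRing.Theory Num.Theory.
Local Open Scope ring_scope.

(* The pristine indices form a feasible choice of [I] in the trimmed problem,
   so the optimal trimmed loss, and a fortiori [1/n] times the sum of squared
   residuals of [(what, bhat)] over [Ihat], is at most [L* = L(D_tr, theta* )].
   Since only [m = alpha n] indices are poisoned, [Ihat] contains at least
   [n - m] pristine ones; their residuals are part of that sum, so their mean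
   is at most [n / (n - m) * L* = L* / (1 - alpha)]. *)

Lemma ex_subset_card {T : finType} {A : {set T}} {k : nat} :
  (k <= #|A|)%N -> exists B : {set T}, B \subset A /\ #|B| = k.
Proof.
elim: k => [|k IHk] hk; first by exists set0; rewrite sub0set cards0.
have [B [sBA cardB]] := IHk (ltnW hk).
have : (0 < #|A :\: B|)%N by rewrite cardsD (setIidPr sBA) cardB subn_gt0.
case/card_gt0P => x; rewrite inE => /andP [xNB xA].
exists (x |: B); split; first by rewrite subUset sub1set xA.
by rewrite cardsU1 xNB cardB.
Qed.

Lemma ler_sum_subset {R : numDomainType} {T : finType} {A B : {set T}}
    (F : T -> R) :
  B \subset A -> (forall i, 0 <= F i) ->
  \sum_(i in B) F i <= \sum_(i in A) F i.
Proof.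
move=> sBA F_ge0; rewrite [X in _ <= X](big_setID B) /= (setIidPr sBA) lerDl.
exact: sumr_ge0.
Qed.

Lemma catd_lshift (T : Type) (n m : nat) (f : 'I_n -> T) (g : 'I_m -> T)
    (i : 'I_n) :
  catd f g (lshift m i) = f i.
Proof. by rewrite /catd -[lshift m i]/(unsplit (inl i)) unsplitK. Qed.

Lemma card_lshift_imset {n m : nat} (A : {set 'I_n}) :
  #|lshift m @: A| = #|A|.
Proof. by apply: card_imset; apply: lshift_inj. Qed.

Lemma card_lshift_preimset {n m : nat} (I : {set 'I_(n + m)}) :
  (#|I| - m <= #|lshift m @^-1: I|)%N.
Proof.
have sub_I :
    I \subset lshift m @: (lshift m @^-1: I) :|: @rshift n m @: [set: 'I_m].
  apply/subsetP => j; rewrite -(splitK j); case: (split j) => [i|k] /= jI.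
    by rewrite in_setU imset_f ?inE.
  by rewrite in_setU orbC imset_f ?inE.
rewrite leq_subLR [(m + _)%N]addnC.
apply: leq_trans (subset_leq_card sub_I) _.
apply: leq_trans (leq_card_setU _ _) _.
apply: leq_add; first exact: leq_imset_card.
by rewrite -[X in (_ <= X)%N](card_ord m) -cardsT leq_imset_card.
Qed.

Section Mse.
Context {R : realFieldType} {d : nat}.

Lemma card_mse (I : finType) (A : {set I}) (x : I -> 'rV[R]_d) (y : I -> R)
    (w : 'rV[R]_d) (b : R) :
  #|A|%:R * mse A x y w b = \sum_(i in A) (dotv w (x i) + b - y i) ^+ 2.
Proof.
rewrite /mse mulrA; have [A0 | /card_gt0P [i iA]] := posnP #|A|.
  by rewrite A0 mul0r big_pred0 ?mul0r // => i; rewrite (card0_eq A0).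
by rewrite mulfV ?mul1r // pnatr_eq0 -lt0n; apply/card_gt0P; exists i.
Qed.

Lemma card_mse_subset {I : finType} {A B : {set I}} (x : I -> 'rV[R]_d)
    (y : I -> R) (w : 'rV[R]_d) (b : R) :
  B \subset A -> #|B|%:R * mse B x y w b <= #|A|%:R * mse A x y w b.
Proof.
by move=> sBA; rewrite !card_mse; apply: ler_sum_subset => // i; apply: sqr_ge0.
Qed.

Lemma mse_le_loss (lam : R) (Omega : 'rV[R]_d -> R) (I : finType)
    (A : {set I}) (x : I -> 'rV[R]_d) (y : I -> R) (w : 'rV[R]_d) (b : R) :
  0 <= lam -> 0 <= Omega w -> mse A x y w b <= loss lam Omega A x y w b.
Proof. by move=> lam_ge0 Omega_ge0; rewrite lerDl mulr_ge0. Qed.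

Lemma mse_lshift {n m : nat} (A : {set 'I_n})
    (xtr : 'I_n -> 'rV[R]_d) (ytr : 'I_n -> R)
    (xp : 'I_m -> 'rV[R]_d) (yp : 'I_m -> R) (w : 'rV[R]_d) (b : R) :
  mse (lshift m @: A) (catd xtr xp) (catd ytr yp) w b = mse A xtr ytr w b.
Proof.
rewrite /mse card_lshift_imset big_imset /=; last by move=> ? ? _ _ /lshift_inj.
by congr (_ * _); apply: eq_bigr => i _; rewrite !catd_lshift.
Qed.

Lemma loss_lshift (lam : R) (Omega : 'rV[R]_d -> R) {n m : nat}
    (A : {set 'I_n}) (xtr : 'I_n -> 'rV[R]_d) (ytr : 'I_n -> R)
    (xp : 'I_m -> 'rV[R]_d) (yp : 'I_m -> R) (w : 'rV[R]_d) (b : R) :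
  loss lam Omega (lshift m @: A) (catd xtr xp) (catd ytr yp) w b
  = loss lam Omega A xtr ytr w b.
Proof. by rewrite /loss mse_lshift. Qed.

End Mse.

Theorem theorem2 (R : realFieldType) (d n m : nat)
    (lam alpha : R) (Omega : 'rV[R]_d -> R)
    (hlam : 0 <= lam) (hOmega : forall w, 0 <= Omega w)
    (halpha0 : 0 <= alpha) (halpha1 : alpha < 1)
    (hn : (0 < n)%N) (hm : m%:R = alpha * n%:R)
    (xtr : 'I_n -> 'rV[R]_d) (ytr : 'I_n -> R)
    (xp : 'I_m -> 'rV[R]_d) (yp : 'I_m -> R)
    (what : 'rV[R]_d) (bhat : R) (Ihat : {set 'I_(n + m)})
    (hIhat : #|Ihat| = n)
    (hmin : forall (w : 'rV[R]_d) (b : R) (I : {set 'I_(n + m)}), #|I| = n ->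
       loss lam Omega Ihat (catd xtr xp) (catd ytr yp) what bhat
       <= loss lam Omega I (catd xtr xp) (catd ytr yp) w b)
    (wstar : 'rV[R]_d) (bstar : R)
    (hstar : forall (w : 'rV[R]_d) (b : R),
       loss lam Omega [set: 'I_n] xtr ytr wstar bstar
       <= loss lam Omega [set: 'I_n] xtr ytr w b) :
  exists D' : {set 'I_n}, #|D'| = (n - m)%N /\
    mse D' xtr ytr what bhat
    <= (1 + alpha / (1 - alpha)) * loss lam Omega [set: 'I_n] xtr ytr wstar bstar.
Proof.
have [D' [sD' card_D']] := ex_subset_card (card_lshift_preimset Ihat).
rewrite hIhat in card_D'; exists D'; split => //.
have n_gt0 : 0 < n%:R :> R by rewrite ltr0n.
have a1_gt0 : 0 < 1 - alpha by rewrite subr_gt0.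
have card_pristine : #|lshift m @: [set: 'I_n]| = n.
  by rewrite card_lshift_imset cardsT card_ord.
have m_le_n : (m <= n)%N by rewrite -(ler_nat R) hm ler_piMl ?ltW.
have n_sub_m : (n - m)%:R = (1 - alpha) * n%:R :> R.
  by rewrite natrB // hm mulrBl mul1r.
have D'_in_Ihat : lshift m @: D' \subset Ihat.
  by apply/subsetP => _ /imsetP [i /(subsetP sD') iI ->]; rewrite inE in iI.
have trimmed_le_pristine := hmin wstar bstar _ card_pristine.
rewrite loss_lshift in trimmed_le_pristine.
have := card_mse_subset (catd xtr xp) (catd ytr yp) what bhat D'_in_Ihat.
rewrite card_lshift_imset mse_lshift.
rewrite card_D' n_sub_m hIhat -mulrA => D'_le_Ihat.
have -> : 1 + alpha / (1 - alpha) = (1 - alpha)^-1 by field; rewrite gt_eqF.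
rewrite ler_pdivlMl // -(ler_pM2l n_gt0) mulrCA (le_trans D'_le_Ihat) //.
by rewrite ler_pM2l // (le_trans _ trimmed_le_pristine) ?mse_le_loss.
Qed.
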